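(* Let $A$ be an open interval with $0\notin A$, let $n\ge 1$ be an integer, and let $f:A\to(0,\infty)$ be $n$ times differentiable on $A$. Then for every $x\in A$, $$f^{*(n)}(x)=\left(\prod_{j=1}^{n}\bigl(f^{\pi(j)}(x)\bigr)^{(-1)^{n-j}s(n,j)}\right)^{\frac{1}{x^{n}}},$$ where $s(n,j)$ denotes the unsigned Stirling numbers of the first kind.
   Context: For a positive differentiable function $g$, the geometric multiplicative derivative is $g^{*}(x)=\lim_{h\to0}\bigl(g(x+h)/g(x)\bigr)^{1/h}=\exp\{g'(x)/g(x)\}$, and the Bigeometric derivative is $g^{\pi}(x)=\lim_{h\to0}\bigl(g((1+h)x)/g(x)\bigr)^{1/h}=\exp\{x\,g'(x)/g(x)\}$. Higher-order derivatives are defined by iteration: $f^{*(0)}=f$, $f^{*(k+1)}=(f^{*(k)})^{*}$, and $f^{\pi(0)}=f$, $f^{\pi(k+1)}=(f^{\pi(k)})^{\pi}$. The unsigned Stirling numbers of the first kind $s(n,j)$ satisfy $s(0,0)=1$, $s(n,0)=0$ for $n\ge1$, and $s(n+1,j)=n\,s(n,j)+s(n,j-1)$. *)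

From Stdlib Require Import Reals.
From Coquelicot Require Import Coquelicot.
Open Scope R_scope.

Definition mstar (g : R -> R) : R -> R := fun x => exp (Derive g x / g x).

Definition mpi (g : R -> R) : R -> R := fun x => exp (x * Derive g x / g x).

Fixpoint iter_deriv (op : (R -> R) -> (R -> R)) (k : nat) (g : R -> R) : R -> R :=
  match k with
  | O => g
  | S k' => op (iter_deriv op k' g)
  end.

Fixpoint stirling1 (n j : nat) : nat :=
  match n, j with
  | O, O => 1%nat
  | O, S _ => 0%nat
  | S _, O => 0%nat
  | S n', S j' => (n' * stirling1 n' (S j') + stirling1 n' j')%nat
  end.

Fixpoint prodR (n : nat) (F : nat -> R) : R :=
  match n with
  | O => 1
  | S k => prodR k F * F (S k)
  end.

(* Write L = ln f.  Then f^{*(k)} = exp (L^(k)) and f^{pi(j)} = exp (theta^j L), where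
   theta = x d/dx is the Euler operator.  The operator identity
   x^n D^n = theta (theta - 1) ... (theta - n + 1) = sum_j (-1)^(n-j) s(n,j) theta^j
   turns into the claimed product once everything is exponentiated. *)
From Stdlib Require Import Reals Lra Lia.
From Coquelicot Require Import Coquelicot.
Open Scope R_scope.

Fixpoint derivable_n_on (P : R -> Prop) (m : nat) (g : R -> R) : Prop :=
  match m with
  | O => True
  | S k => (forall x, P x -> ex_derive g x) /\ derivable_n_on P k (Derive g)
  end.

Lemma derivable_n_on_pred P m g : derivable_n_on P (S m) g -> derivable_n_on P m g.
Proof.
revert g; induction m as [|m IH]; simpl; intros g Cg; auto.
destruct Cg as [G1 [G2 G3]]; split; auto.
apply IH; simpl; auto.
Qed.

Lemma Derive_n_Derive g k x : Derive_n (Derive g) k x = Derive_n g (S k) x.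
Proof. rewrite (Derive_n_comp g k 1). f_equal. lia. Qed.

Lemma derivable_n_onP P m g :
  derivable_n_on P m g <->
  (forall k, (k < m)%nat -> forall x, P x -> ex_derive (Derive_n g k) x).
Proof.
revert g; induction m as [|m IH]; intros g; simpl; split.
- intros _ k Hk; lia.
- auto.
- intros [C1 C2] [|k] Hk x Px; auto.
  apply (ex_derive_ext (Derive_n (Derive g) k)); [intros; apply Derive_n_Derive|].
  apply IH; auto; lia.
- intros H; split.
  + intros x Px; apply (H 0%nat); auto; lia.
  + apply IH; intros k Hk x Px.
    apply (ex_derive_ext (Derive_n g (S k))); [intros; symmetry; apply Derive_n_Derive|].
    apply H; auto; lia.
Qed.

Definition euler_op (g : R -> R) : R -> R := fun x => x * Derive g x.

Lemma euler_op_pow_mul m (h : R -> R) x : ex_derive h x ->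
  euler_op (fun y => y ^ m * h y) x = INR m * (x ^ m * h x) + x ^ S m * Derive h x.
Proof.
intros Hh; unfold euler_op.
assert (Hp : is_derive (fun y => y ^ m) x (INR m * 1 * x ^ pred m))
  by (apply (is_derive_pow (fun y => y)), (is_derive_id x)).
assert (Ep : Derive (fun y : R => y ^ m) x = INR m * 1 * x ^ pred m)
  by (apply is_derive_unique, Hp).
rewrite Derive_mult, Ep; [|eexists; exact Hp|auto].
destruct m; simpl; ring.
Qed.

Lemma is_derive_sum_f_R0 (T : nat -> R -> R) (dT : nat -> R) m x :
  (forall j, (j <= m)%nat -> is_derive (T j) x (dT j)) ->
  is_derive (fun y => sum_f_R0 (fun j => T j y) m) x (sum_f_R0 dT m).
Proof.
intros H; rewrite <- sum_n_Reals.
apply (is_derive_ext (fun y => sum_n (fun j => T j y) m)); [intros; apply sum_n_Reals|].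
exact (is_derive_sum_n T m x dT H).
Qed.

Lemma euler_op_lin_comb (c : nat -> R) (T : nat -> R -> R) m x :
  (forall j, (j <= m)%nat -> ex_derive (T j) x) ->
  euler_op (fun y => sum_f_R0 (fun j => c j * T j y) m) x =
  sum_f_R0 (fun j => c j * euler_op (T j) x) m.
Proof.
intros H; unfold euler_op.
rewrite (is_derive_unique _ _ (sum_f_R0 (fun j => c j * Derive (T j) x) m)).
- rewrite scal_sum; apply sum_eq; intros; ring.
- apply (is_derive_sum_f_R0 (fun j y => c j * T j y)); intros j Hj.
  apply is_derive_scal, Derive_correct; auto.
Qed.

Definition stirling1_signed (m j : nat) : R := (-1) ^ (m - j) * INR (stirling1 m j).

Lemma stirling1_gt m j : (m < j)%nat -> stirling1 m j = 0%nat.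
Proof.
revert j; induction m as [|m IH]; intros [|j] H; simpl; try lia; auto.
rewrite !IH; lia.
Qed.

Lemma stirling1_signed_S_0 m : stirling1_signed (S m) 0 = - INR m * stirling1_signed m 0.
Proof. unfold stirling1_signed; destruct m; simpl; ring. Qed.

Lemma stirling1_signed_S_S m j : (j <= m)%nat ->
  stirling1_signed (S m) (S j) = stirling1_signed m j - INR m * stirling1_signed m (S j).
Proof.
intros H; unfold stirling1_signed; simpl (S m - S j)%nat; simpl stirling1.
rewrite plus_INR, mult_INR.
destruct (Nat.eq_dec j m) as [->|Hne].
- rewrite (stirling1_gt m (S m)) by lia; simpl; ring.
- replace (m - j)%nat with (S (m - S j)) by lia; simpl; ring.
Qed.

(* With t j = theta^j L x this is  sum_j s(m+1,j) theta^j = (theta - m) sum_j s(m,j) theta^j. *)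
Lemma sum_stirling1_signed_S (t : nat -> R) m :
  sum_f_R0 (fun j => stirling1_signed (S m) j * t j) (S m) =
  sum_f_R0 (fun j => stirling1_signed m j * t (S j)) m -
  INR m * sum_f_R0 (fun j => stirling1_signed m j * t j) m.
Proof.
set (u := fun j => stirling1_signed m j * t j).
assert (Hshift : sum_f_R0 (fun j => u (S j)) m = sum_f_R0 u m - u 0%nat).
{ assert (Hlast : u (S m) = 0).
  { unfold u, stirling1_signed; rewrite stirling1_gt by lia; simpl; ring. }
  assert (E : sum_f_R0 u (S m) = sum_f_R0 u m) by (simpl; rewrite Hlast; ring).
  rewrite decomp_sum in E by lia; simpl pred in E; lra. }
rewrite decomp_sum by lia; simpl pred.
rewrite (sum_eq _ (fun j => stirling1_signed m j * t (S j) - u (S j) * INR m)).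
2:{ intros j Hj; unfold u; rewrite stirling1_signed_S_S; auto; ring. }
rewrite minus_sum, <- scal_sum, Hshift, stirling1_signed_S_0.
unfold u; ring.
Qed.

Lemma prodR_ext n F G : (forall j, (1 <= j <= n)%nat -> F j = G j) -> prodR n F = prodR n G.
Proof.
induction n as [|n IH]; intros H; simpl; auto.
rewrite IH by (intros; apply H; lia); rewrite H by lia; auto.
Qed.

Lemma prodR_exp n g : prodR n (fun j => exp (g j)) = exp (sum_f_R0 g n - g 0%nat).
Proof.
induction n as [|n IH]; simpl.
- replace (g 0%nat - g 0%nat) with 0 by ring; rewrite exp_0; auto.
- rewrite IH, <- exp_plus; f_equal; ring.
Qed.

Section OpenSet.

Variable P : R -> Prop.
Hypothesis P_open : open P.

Lemma eq_loc_on (g h : R -> R) x : P x -> (forall y, P y -> g y = h y) ->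
  locally x (fun y => g y = h y).
Proof. intros Px E; apply (filter_imp P); auto. Qed.

Lemma derivable_n_on_ext m : forall g h,
  (forall x, P x -> g x = h x) -> derivable_n_on P m g -> derivable_n_on P m h.
Proof.
induction m as [|m IH]; simpl; intros g h E C; auto.
destruct C as [C1 C2]; split.
- intros x Px; apply (ex_derive_ext_loc g); auto using eq_loc_on.
- apply (IH (Derive g)); auto.
  intros x Px; apply Derive_ext_loc; auto using eq_loc_on.
Qed.

Lemma derivable_n_on_const m c : derivable_n_on P m (fun _ => c).
Proof.
revert c; induction m as [|m IH]; simpl; intros c; auto.
split; [intros; apply ex_derive_const|].
apply (derivable_n_on_ext m (fun _ => 0)); auto.
intros; rewrite Derive_const; auto.
Qed.

Lemma derivable_n_on_id m : derivable_n_on P m (fun x => x).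
Proof.
destruct m as [|m]; simpl; auto.
split; [intros; apply ex_derive_id|].
apply (derivable_n_on_ext m (fun _ => 1)); [intros; rewrite Derive_id; auto|].
apply derivable_n_on_const.
Qed.

Lemma derivable_n_on_plus m : forall g h,
  derivable_n_on P m g -> derivable_n_on P m h -> derivable_n_on P m (fun x => g x + h x).
Proof.
induction m as [|m IH]; simpl; intros g h Cg Ch; auto.
destruct Cg as [G1 G2], Ch as [H1 H2].
split; [intros; apply (ex_derive_plus g h); auto|].
apply (derivable_n_on_ext m (fun x => Derive g x + Derive h x)); auto.
intros; rewrite Derive_plus; auto.
Qed.

Lemma derivable_n_on_mult m : forall g h,
  derivable_n_on P m g -> derivable_n_on P m h -> derivable_n_on P m (fun x => g x * h x).
Proof.
induction m as [|m IH]; intros g h Cg Ch; simpl; auto.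
pose proof (derivable_n_on_pred _ _ _ Cg) as Cg'.
pose proof (derivable_n_on_pred _ _ _ Ch) as Ch'.
destruct Cg as [G1 G2], Ch as [H1 H2]; split.
- intros; apply ex_derive_mult; auto.
- apply (derivable_n_on_ext m (fun x => Derive g x * h x + g x * Derive h x)).
  + intros; rewrite Derive_mult; auto.
  + apply derivable_n_on_plus; auto.
Qed.

Lemma derivable_n_on_inv m : forall g,
  (forall x, P x -> g x <> 0) -> derivable_n_on P m g -> derivable_n_on P m (fun x => / g x).
Proof.
induction m as [|m IH]; intros g Hg Cg; simpl; auto.
pose proof (derivable_n_on_pred _ _ _ Cg) as Cg'.
destruct Cg as [G1 G2]; split.
- intros; apply ex_derive_inv; auto.
- apply (derivable_n_on_ext m (fun x => - Derive g x * (/ g x * / g x))).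
  + intros x Px; rewrite Derive_inv; auto. field; auto.
  + apply derivable_n_on_mult; [|apply derivable_n_on_mult; auto].
    apply (derivable_n_on_ext m (fun x => -1 * Derive g x)); [intros; ring|].
    apply derivable_n_on_mult; auto using derivable_n_on_const.
Qed.

Lemma derivable_n_on_ln m g :
  (forall x, P x -> 0 < g x) -> derivable_n_on P m g -> derivable_n_on P m (fun x => ln (g x)).
Proof.
destruct m as [|m]; intros Hg Cg; simpl; auto.
pose proof (derivable_n_on_pred _ _ _ Cg) as Cg'.
destruct Cg as [G1 G2].
assert (Hln : forall x, P x -> is_derive ln (g x) (/ g x)) by (intros; apply is_derive_ln; auto).
split.
- intros x Px; apply (ex_derive_comp ln g); [exists (/ g x); apply (Hln x Px)|]; auto.
- apply (derivable_n_on_ext m (fun x => Derive g x * / g x)).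
  + intros x Px; rewrite (Derive_comp ln g x); [|exists (/ g x); apply (Hln x Px)|auto].
    rewrite (is_derive_unique _ _ _ (Hln x Px)); auto.
  + apply derivable_n_on_mult; auto.
    apply derivable_n_on_inv; auto; intros x Px; specialize (Hg x Px); lra.
Qed.

Lemma derivable_n_on_iter_euler_op j : forall m g,
  derivable_n_on P (j + m) g -> derivable_n_on P m (iter_deriv euler_op j g).
Proof.
induction j as [|j IH]; intros m g C; simpl; auto.
assert (Cj : derivable_n_on P (S m) (iter_deriv euler_op j g))
  by (apply IH; rewrite Nat.add_succ_r; auto).
destruct Cj as [_ C']; unfold euler_op.
apply derivable_n_on_mult; auto using derivable_n_on_id.
Qed.

Lemma ex_derive_iter_euler_op n g j x : derivable_n_on P n g ->
  (j < n)%nat -> P x -> ex_derive (iter_deriv euler_op j g) x.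
Proof.
intros C Hj Px.
assert (Cj : derivable_n_on P (S (n - S j)) (iter_deriv euler_op j g)).
{ apply derivable_n_on_iter_euler_op.
  replace (j + S (n - S j))%nat with n by lia; auto. }
exact (proj1 Cj x Px).
Qed.

Lemma euler_op_ext_on (g h : R -> R) x : P x ->
  (forall y, P y -> g y = h y) -> euler_op g x = euler_op h x.
Proof. intros Px E; unfold euler_op; f_equal; apply Derive_ext_loc, eq_loc_on; auto. Qed.

Lemma pow_mul_Derive_n_stirling n L : derivable_n_on P n L ->
  forall m, (m <= n)%nat -> forall x, P x ->
  x ^ m * Derive_n L m x =
  sum_f_R0 (fun j => stirling1_signed m j * iter_deriv euler_op j L x) m.
Proof.
intros CL m; induction m as [|m IH]; intros Hm x Px.
- unfold stirling1_signed; simpl; ring.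
- assert (HdL : ex_derive (Derive_n L m) x) by (apply (derivable_n_onP P n); auto; lia).
  assert (Htheta :
    INR m * (x ^ m * Derive_n L m x) + x ^ S m * Derive_n L (S m) x =
    sum_f_R0 (fun j => stirling1_signed m j * iter_deriv euler_op (S j) L x) m).
  { rewrite <- euler_op_pow_mul by auto.
    rewrite (euler_op_ext_on _ _ x Px (fun y Py => IH ltac:(lia) y Py)).
    apply euler_op_lin_comb; intros j Hj.
    apply (ex_derive_iter_euler_op n); auto; lia. }
  rewrite sum_stirling1_signed_S, <- IH by (auto; lia).
  lra.
Qed.

Lemma Derive_exp_comp_div (g h : R -> R) x : P x ->
  (forall y, P y -> g y = exp (h y)) -> ex_derive h x ->
  Derive g x / g x = Derive h x.
Proof.
intros Px E Hh.
rewrite (Derive_ext_loc g (fun y : R => exp (h y))) by (apply eq_loc_on; auto).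
rewrite (Derive_comp exp h x); [|eexists; apply is_derive_exp|auto].
rewrite (is_derive_unique _ _ _ (is_derive_exp _)), E by auto.
field; apply Rgt_not_eq, exp_pos.
Qed.

Lemma iter_mstar_exp n f L : (forall y, P y -> f y = exp (L y)) ->
  derivable_n_on P n L ->
  forall k, (k <= n)%nat -> forall x, P x -> iter_deriv mstar k f x = exp (Derive_n L k x).
Proof.
intros E CL k; induction k as [|k IH]; intros Hk x Px; simpl; auto.
unfold mstar; f_equal.
apply Derive_exp_comp_div; auto; [intros y Py; apply IH; auto; lia|].
apply (derivable_n_onP P n); auto; lia.
Qed.

Lemma iter_mpi_exp n f L : (forall y, P y -> f y = exp (L y)) ->
  derivable_n_on P n L ->
  forall j, (j <= n)%nat -> forall x, P x ->
  iter_deriv mpi j f x = exp (iter_deriv euler_op j L x).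
Proof.
intros E CL j; induction j as [|j IH]; intros Hj x Px; simpl; auto.
unfold mpi, euler_op at 1; f_equal; unfold Rdiv; rewrite Rmult_assoc; f_equal.
apply Derive_exp_comp_div; auto; [intros y Py; apply IH; auto; lia|].
apply (ex_derive_iter_euler_op n); auto; lia.
Qed.

End OpenSet.

Theorem theorem2 (a b : Rbar) (n : nat) (f : R -> R) :
  Rbar_lt a b ->
  ~ (Rbar_lt a 0 /\ Rbar_lt 0 b) ->
  (1 <= n)%nat ->
  (forall x : R, Rbar_lt a x -> Rbar_lt x b -> 0 < f x) ->
  (forall k, (k < n)%nat -> forall x : R, Rbar_lt a x -> Rbar_lt x b ->
     ex_derive (Derive_n f k) x) ->
  forall x : R, Rbar_lt a x -> Rbar_lt x b ->
    iter_deriv mstar n f x =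
    Rpower
      (prodR n (fun j => Rpower (iter_deriv mpi j f x)
                                ((-1) ^ (n - j) * INR (stirling1 n j))))
      (/ x ^ n).
Proof.
intros _ H0notin Hn Hf Hd x Hax Hxb.
set (P := fun y : R => Rbar_lt a y /\ Rbar_lt y b).
assert (HP : open P) by (apply open_and; [apply open_Rbar_gt | apply open_Rbar_lt]).
assert (Px : P x) by (split; auto).
assert (Hx0 : x <> 0) by (intros ->; auto).
set (L := fun y => ln (f y)).
assert (E : forall y, P y -> f y = exp (L y)) by (intros y [? ?]; unfold L; rewrite exp_ln; auto).
assert (CL : derivable_n_on P n L).
{ apply derivable_n_on_ln; auto; [intros y [? ?]; auto|].
  apply derivable_n_onP; intros k Hk y [? ?]; auto. }
rewrite (iter_mstar_exp P HP n f L E CL n (le_n n) x Px).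
rewrite (prodR_ext n _ (fun j => exp (stirling1_signed n j * iter_deriv euler_op j L x))).
2:{ intros j Hj; rewrite (iter_mpi_exp P HP n f L E CL j ltac:(lia) x Px).
    unfold Rpower; rewrite ln_exp; auto. }
rewrite prodR_exp, <- (pow_mul_Derive_n_stirling P HP n L CL n (le_n n) x Px).
unfold Rpower; rewrite ln_exp; f_equal.
destruct n as [|n]; [lia|].
unfold stirling1_signed; simpl stirling1; simpl INR.
field; apply pow_nonzero; auto.
Qed.
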